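(* Let $\sum_{n=1}^{\infty}x_n$ be an absolutely convergent real series whose associated function $f(\chi_A)=\sum_{n\in A}x_n$ is injective on $W=\{\chi_A\in\{0,1\}^{\mathbb{N}} : A \text{ is infinite and } \mathbb{N}\setminus A\text{ is infinite}\}$. Then for all ideals $I,J$ on $\mathbb{N}$ containing $\mathrm{Fin}$ we have $A_{I\cap J}(x_n)=A_I(x_n)\cap A_J(x_n)$.
   Context: An ideal on $\mathbb{N}$ is a family $I\subseteq P(\mathbb{N})$ closed under finite unions and subsets with $\mathbb{N}\notin I$; $\mathrm{Fin}$ is the ideal of finite sets. Subsets of $\mathbb{N}$ are identified with characteristic functions in $\{0,1\}^{\mathbb{N}}$. $A_I(x_n)=\{\sum_{n\in A}x_n : A\in I\}$. *)

From Stdlib Require Import Reals.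
Open Scope R_scope.

(* Subsets of nat are identified with characteristic functions nat -> bool. *)
Definition subset_of (A B : nat -> bool) : Prop :=
  forall n, A n = true -> B n = true.

Definition finite_set (A : nat -> bool) : Prop :=
  exists N, forall n, A n = true -> (n < N)%nat.

Definition infinite_set (A : nat -> bool) : Prop :=
  forall N, exists n, (N <= n)%nat /\ A n = true.

Definition compl (A : nat -> bool) : nat -> bool := fun n => negb (A n).

Definition union (A B : nat -> bool) : nat -> bool := fun n => orb (A n) (B n).

Definition W (A : nat -> bool) : Prop := infinite_set A /\ infinite_set (compl A).

Definition is_ideal (I : (nat -> bool) -> Prop) : Prop :=
  (forall A B, I A -> I B -> I (union A B)) /\
  (forall A B, I B -> subset_of A B -> I A) /\
  ~ I (fun _ => true).

Definition contains_Fin (I : (nat -> bool) -> Prop) : Prop :=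
  forall A, finite_set A -> I A.

Definition ideal_inter (I J : (nat -> bool) -> Prop) : (nat -> bool) -> Prop :=
  fun A => I A /\ J A.

Definition abs_convergent (x : nat -> R) : Prop :=
  exists l, infinite_sum (fun n => Rabs (x n)) l.

Definition subsum (x : nat -> R) (A : nat -> bool) (s : R) : Prop :=
  infinite_sum (fun n => if A n then x n else 0) s.

Definition f_injective_on_W (x : nat -> R) : Prop :=
  forall A B s, W A -> W B -> subsum x A s -> subsum x B s -> A = B.

Definition achievement_set (I : (nat -> bool) -> Prop) (x : nat -> R) (s : R) : Prop :=
  exists A, I A /\ subsum x A s.

From Stdlib Require Import Reals Classical Lia.
Open Scope R_scope.

(* A set in both I and J witnessing s is in I ∩ J. Otherwise one of the two
   witnesses is infinite; every member of an ideal containing Fin is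
   co-infinite, so both witnesses lie in W, and injectivity of f on W makes
   them equal. *)

Lemma finite_set_of_not_infinite (A : nat -> bool) :
  ~ infinite_set A -> finite_set A.
Proof.
  intros Hinf; apply NNPP; intros Hfin; apply Hinf; intros N.
  apply NNPP; intros Hnone; apply Hfin; exists N; intros n Hn.
  destruct (Nat.lt_ge_cases n N) as [Hlt | Hge]; [exact Hlt |].
  exfalso; apply Hnone; exists n; split; assumption.
Qed.

(* Otherwise A ∪ (ℕ ∖ A) = ℕ would belong to I. *)
Lemma ideal_compl_infinite (I : (nat -> bool) -> Prop) (A : nat -> bool) :
  is_ideal I -> contains_Fin I -> I A -> infinite_set (compl A).
Proof.
  intros [Hunion [Hsub Hproper]] HFin HA.
  apply NNPP; intros Hcompl; apply Hproper.
  apply Hsub with (union A (compl A)).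
  - apply Hunion; [exact HA |].
    apply HFin, finite_set_of_not_infinite, Hcompl.
  - intros n _; unfold union, compl; destruct (A n); reflexivity.
Qed.

Lemma ideal_infinite_in_W (I : (nat -> bool) -> Prop) (A : nat -> bool) :
  is_ideal I -> contains_Fin I -> I A -> ~ finite_set A -> W A.
Proof.
  intros HI HFin HA Hfin; split.
  - apply NNPP; intros Hinf; apply Hfin, finite_set_of_not_infinite, Hinf.
  - exact (ideal_compl_infinite I A HI HFin HA).
Qed.

Theorem mainTheorem19 (x : nat -> R)
  (habs : abs_convergent x) (hinj : f_injective_on_W x) :
  forall (I J : (nat -> bool) -> Prop),
    is_ideal I -> is_ideal J -> contains_Fin I -> contains_Fin J ->
    forall s : R,
      achievement_set (ideal_inter I J) x s <->
      (achievement_set I x s /\ achievement_set J x s).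
Proof.
  intros I J HI HJ HIFin HJFin s; split.
  - intros [A [[HIA HJA] HsA]]; split; exists A; split; assumption.
  - intros [[A [HIA HsA]] [B [HJB HsB]]].
    destruct (classic (finite_set A)) as [HAfin | HAinf].
    { exists A; split; [split; [exact HIA | apply HJFin, HAfin] | exact HsA]. }
    destruct (classic (finite_set B)) as [HBfin | HBinf].
    { exists B; split; [split; [apply HIFin, HBfin | exact HJB] | exact HsB]. }
    assert (HAB : A = B).
    { apply (hinj A B s); [exact (ideal_infinite_in_W I A HI HIFin HIA HAinf)
                          | exact (ideal_infinite_in_W J B HJ HJFin HJB HBinf)
                          | exact HsA | exact HsB]. }
    subst B; exists A; split; [split |]; assumption.
Qed.
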